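(* In the setting described in the context, suppose the initial datum is constant, $u_0(x)=u_\star$ for all $x\in\mathbb R$, and the color function $v:\mathbb R\to[0,1]$ is any smooth function. Then the discrete solution produced by the scheme is constant in space at every time level: $u^n_j=u_\star$ for all $n\ge0$ and all $j\in\mathbb Z$, i.e. $u_{\Delta x}(t^n,x)=u_\star$ for all $x\in\mathbb R$.
   Context: Let $f^\pm:\mathbb R\to\mathbb R$ be twice differentiable, $\theta_\pm:\mathbb R\to\mathbb R$ increasing bijections with inverses $\gamma_\pm$. For $u\in\mathbb R$, $v\in[0,1]$, $\mathcal C_0(u,v)=(1-v)\gamma_-(u)+v\gamma_+(u)$, $\mathcal C_1(u,v)=(1-v)f^-(\gamma_-(u))+vf^+(\gamma_+(u))$, $w(u,v)=\mathcal C_0(u,v)$, with $\partial_uw(u,v)>0$; $u(w,v)$ denotes the inverse in $u$ and $f(w,v)=\mathcal C_1(u(w,v),v)$. Mesh $\Delta t,\Delta x>0$, $x_j=j\Delta x$; $u^0_j=\frac1{\Delta x}\int_{x_{j-1/2}}^{x_{j+1/2}}u_0$, $v_{j+1/2}=\frac1{\Delta x}\int_{x_j}^{x_{j+1}}v$. Numerical flux $g(\cdot,\cdot;v)$: locally Lipschitz, $g(a,a;v)=f(a,v)$, nondecreasing in the first and nonincreasing in the second argument. Scheme: $w^n_{j-1/2,+}=w(u^n_j,v_{j-1/2})$, $w^n_{j+1/2,-}=w(u^n_j,v_{j+1/2})$, $w^n_j=\frac12(w^n_{j-1/2,+}+w^n_{j+1/2,-})$; $g^n_{j+1/2}=g(w^n_{j+1/2,-},w^n_{j+1/2,+};v_{j+1/2})$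 (where $w^n_{j+1/2,+}=w(u^n_{j+1},v_{j+1/2})$), $G^n_{j+1/2,-}=g^n_{j+1/2}-f(w^n_{j+1/2,-},v_{j+1/2})$, $G^n_{j-1/2,+}=g^n_{j-1/2}-f(w^n_{j-1/2,+},v_{j-1/2})$, $w^{n+1}_j=w^n_j-\frac{\Delta t}{\Delta x}(G^n_{j+1/2,-}-G^n_{j-1/2,+})$, and $u^{n+1}_j$ is the unique solution of $\frac12(w(u^{n+1}_j,v_{j-1/2})+w(u^{n+1}_j,v_{j+1/2}))=w^{n+1}_j$; $u_{\Delta x}(t^n,x)=u^n_j$ on $(x_{j-1/2},x_{j+1/2})$. *)

From Stdlib Require Import Reals Lra ZArith.
From Coquelicot Require Import Coquelicot.
Open Scope R_scope.

Definition C0 (gm gp : R -> R) (u v : R) : R := (1 - v) * gm u + v * gp u.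

Definition C1 (fm fp gm gp : R -> R) (u v : R) : R :=
  (1 - v) * fm (gm u) + v * fp (gp u).

(* f(w,v) = C_1(u(w,v),v), where uinv w v = u(w,v) is the inverse of w(.,v) *)
Definition fflux (fm fp gm gp : R -> R) (uinv : R -> R -> R) (w v : R) : R :=
  C1 fm fp gm gp (uinv w v) v.

(* v_{j+1/2} = (1/dx) int_{x_j}^{x_{j+1}} v,  x_j = j dx *)
Definition vhalf (v : R -> R) (dx : R) (j : Z) : R :=
  / dx * RInt v (IZR j * dx) (IZR (j + 1) * dx).

Definition cell_avg (u0 : R -> R) (dx : R) (j : Z) : R :=
  / dx * RInt u0 ((IZR j - / 2) * dx) ((IZR j + / 2) * dx).

Section Scheme.
Variables (fm fp gm gp : R -> R) (uinv : R -> R -> R)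
          (g : R -> R -> R -> R) (v : R -> R) (dt dx : R).

Let w := C0 gm gp.
Let f := fflux fm fp gm gp uinv.
Let vh := vhalf v dx.

(* U : the current level u^n_j, j in Z *)
Definition w_left (U : Z -> R) (j : Z) : R := w (U j) (vh (j - 1)%Z).
Definition w_right (U : Z -> R) (j : Z) : R := w (U j) (vh j).
Definition w_avg (U : Z -> R) (j : Z) : R := (w_left U j + w_right U j) / 2.
Definition g_half (U : Z -> R) (j : Z) : R :=
  g (w_right U j) (w (U (j + 1)%Z) (vh j)) (vh j).
Definition G_minus (U : Z -> R) (j : Z) : R := g_half U j - f (w_right U j) (vh j).
Definition G_plus (U : Z -> R) (j : Z) : R :=
  g_half U (j - 1)%Z - f (w_left U j) (vh (j - 1)%Z).
Definition w_next (U : Z -> R) (j : Z) : R :=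
  w_avg U j - dt / dx * (G_minus U j - G_plus U j).

Definition is_scheme_solution (u0 : R -> R) (u : nat -> Z -> R) : Prop :=
  (forall j, u O j = cell_avg u0 dx j) /\
  (forall n j, (w (u (S n) j) (vh (j - 1)%Z) + w (u (S n) j) (vh j)) / 2
               = w_next (u n) j).

End Scheme.

Definition locally_lipschitz2 (h : R -> R -> R) : Prop :=
  forall M, exists L, forall a b a' b',
    Rabs a <= M -> Rabs b <= M -> Rabs a' <= M -> Rabs b' <= M ->
    Rabs (h a b - h a' b') <= L * (Rabs (a - a') + Rabs (b - b')).

Definition twice_differentiable (h : R -> R) : Prop :=
  (forall x, ex_derive h x) /\ (forall x, ex_derive (Derive h) x).

Definition smooth (h : R -> R) : Prop := forall n x, ex_derive_n h n x.

From Stdlib Require Import Reals ZArith Lra.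
From Coquelicot Require Import Coquelicot.
Open Scope R_scope.

(* A constant state is a fixed point of the scheme: by consistency of the
   numerical flux, every correction [G] vanishes, so [w^{n+1}_j = w^n_j], and
   [u^{n+1}_j] is then pinned down because [u |-> w(u,v_{j-1/2}) + w(u,v_{j+1/2})]
   is strictly increasing.  The cell averages [v_{j+1/2}] lie in [0,1], which is
   where all hypotheses on [w], [g] are available. *)

Lemma strict_mono_inverse (th gm : R -> R) :
  (forall x y, x < y -> th x < th y) -> (forall y, th (gm y) = y) ->
  forall x y, x < y -> gm x < gm y.
Proof.
  intros Hth Hinv x y Hxy.
  destruct (Rtotal_order (gm x) (gm y)) as [Hlt | [Heq | Hgt]]; [exact Hlt | |].
  - rewrite <- (Hinv x), <- (Hinv y), Heq in Hxy; lra.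
  - apply Hth in Hgt; rewrite !Hinv in Hgt; lra.
Qed.

Lemma C0_strict_mono (gm gp : R -> R) (vv : R) :
  (forall x y, x < y -> gm x < gm y) -> (forall x y, x < y -> gp x < gp y) ->
  0 <= vv <= 1 -> forall x y, x < y -> C0 gm gp x vv < C0 gm gp y vv.
Proof.
  intros Hm Hp Hv x y Hxy; unfold C0.
  specialize (Hm _ _ Hxy); specialize (Hp _ _ Hxy).
  destruct (Req_dec vv 0) as [-> | Hv0]; [lra |].
  assert (0 <= (1 - vv) * (gm y - gm x)) by (apply Rmult_le_pos; lra).
  assert (0 < vv * (gp y - gp x)) by (apply Rmult_lt_0_compat; lra).
  lra.
Qed.

Lemma strict_mono_sum_inj (h1 h2 : R -> R) :
  (forall x y, x < y -> h1 x < h1 y) -> (forall x y, x < y -> h2 x < h2 y) ->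
  forall x y, h1 x + h2 x = h1 y + h2 y -> x = y.
Proof.
  intros H1 H2 x y Hxy.
  destruct (Rtotal_order x y) as [Hlt | [Heq | Hgt]]; [| exact Heq |].
  - specialize (H1 _ _ Hlt); specialize (H2 _ _ Hlt); lra.
  - specialize (H1 _ _ Hgt); specialize (H2 _ _ Hgt); lra.
Qed.

Lemma smooth_continuous (h : R -> R) : smooth h -> forall x, continuous h x.
Proof.
  intros Hh x.
  apply (ex_derive_continuous (K := R_AbsRing) (V := R_NormedModule)).
  exact (Hh 1%nat x).
Qed.

Lemma cell_avg_const (u0 : R -> R) (c dx : R) (j : Z) :
  dx <> 0 -> (forall x, u0 x = c) -> cell_avg u0 dx j = c.
Proof.
  intros Hdx Hc; unfold cell_avg.
  rewrite (RInt_ext u0 (fun _ => c)) by auto.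
  rewrite RInt_const; unfold scal; simpl; unfold mult; simpl.
  field; exact Hdx.
Qed.

Lemma vhalf_unit_interval (v : R -> R) (dx : R) (j : Z) :
  0 < dx -> (forall x, continuous v x) -> (forall x, 0 <= v x <= 1) ->
  0 <= vhalf v dx j <= 1.
Proof.
  intros Hdx Hc Hr; unfold vhalf.
  set (a := IZR j * dx); set (b := IZR (j + 1) * dx).
  assert (Hba : b - a = dx) by (unfold a, b; rewrite plus_IZR; ring).
  assert (Hex : ex_RInt v a b)
    by (apply (ex_RInt_continuous (V := R_CompleteNormedModule)); auto).
  assert (Hlo : RInt (fun _ => 0) a b <= RInt v a b)
    by (apply RInt_le; auto; [lra | apply ex_RInt_const | intros; apply Hr]).
  assert (Hhi : RInt v a b <= RInt (fun _ => 1) a b)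
    by (apply RInt_le; auto; [lra | apply ex_RInt_const | intros; apply Hr]).
  rewrite !RInt_const, Hba in Hlo, Hhi.
  unfold scal in Hlo, Hhi; simpl in Hlo, Hhi; unfold mult in Hlo, Hhi; simpl in Hlo, Hhi.
  assert (Hinv : 0 < / dx) by (apply Rinv_0_lt_compat; lra).
  split; [apply Rmult_le_pos; lra |].
  replace 1 with (/ dx * (dx * 1)) by (field; lra).
  apply Rmult_le_compat_l; lra.
Qed.

Lemma w_next_const (fm fp gm gp : R -> R) (uinv : R -> R -> R)
  (g : R -> R -> R -> R) (v : R -> R) (dt dx c : R) (U : Z -> R) :
  (forall a j, g a a (vhalf v dx j) = fflux fm fp gm gp uinv a (vhalf v dx j)) ->
  (forall j, U j = c) ->
  forall j, w_next fm fp gm gp uinv g v dt dx U j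
            = (C0 gm gp c (vhalf v dx (j - 1)) + C0 gm gp c (vhalf v dx j)) / 2.
Proof.
  intros Hcons HU j.
  unfold w_next, w_avg, G_minus, G_plus, g_half, w_left, w_right.
  rewrite !HU, !Hcons; ring.
Qed.

Theorem proposition2p2
  (fm fp thm thp gm gp : R -> R) (uinv : R -> R -> R)
  (g : R -> R -> R -> R) (v u0 : R -> R) (ustar dt dx : R)
  (u : nat -> Z -> R)
  (* f^+- twice differentiable *)
  (Hfm : twice_differentiable fm) (Hfp : twice_differentiable fp)
  (* theta_+- increasing bijections with inverses gamma_+- *)
  (Hthm_incr : forall x y, x < y -> thm x < thm y)
  (Hthp_incr : forall x y, x < y -> thp x < thp y)
  (Hgm1 : forall x, gm (thm x) = x) (Hgm2 : forall y, thm (gm y) = y)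
  (Hgp1 : forall x, gp (thp x) = x) (Hgp2 : forall y, thp (gp y) = y)
  (* d_u w(u,v) > 0 *)
  (Hdw : forall uu vv, 0 <= vv <= 1 ->
           ex_derive (fun z => C0 gm gp z vv) uu /\
           0 < Derive (fun z => C0 gm gp z vv) uu)
  (* u(w,v) is the inverse of w(.,v) *)
  (Huinv1 : forall uu vv, 0 <= vv <= 1 -> uinv (C0 gm gp uu vv) vv = uu)
  (Huinv2 : forall ww vv, 0 <= vv <= 1 -> C0 gm gp (uinv ww vv) vv = ww)
  (* mesh *)
  (Hdt : 0 < dt) (Hdx : 0 < dx)
  (* numerical flux *)
  (Hg_lip : forall vv, 0 <= vv <= 1 -> locally_lipschitz2 (fun a b => g a b vv))
  (Hg_cons : forall a vv, 0 <= vv <= 1 -> g a a vv = fflux fm fp gm gp uinv a vv)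
  (Hg_mono1 : forall a a' b vv, 0 <= vv <= 1 -> a <= a' -> g a b vv <= g a' b vv)
  (Hg_mono2 : forall a b b' vv, 0 <= vv <= 1 -> b <= b' -> g a b' vv <= g a b vv)
  (* color function *)
  (Hv_smooth : smooth v) (Hv_range : forall x, 0 <= v x <= 1)
  (* constant initial datum *)
  (Hu0 : forall x, u0 x = ustar)
  (* u is the discrete solution produced by the scheme *)
  (Hu : is_scheme_solution fm fp gm gp uinv g v dt dx u0 u) :
  forall n j, u n j = ustar.
Proof.
  destruct Hu as [Hinit Hstep].
  assert (Hvh : forall j, 0 <= vhalf v dx j <= 1).
  { intro j; apply vhalf_unit_interval; auto using smooth_continuous. }
  assert (Hw : forall j x y, x < y -> C0 gm gp x (vhalf v dx j) < C0 gm gp y (vhalf v dx j)).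
  { intro j; apply C0_strict_mono; [exact (strict_mono_inverse thm gm Hthm_incr Hgm2)
                                    | exact (strict_mono_inverse thp gp Hthp_incr Hgp2)
                                    | apply Hvh]. }
  intro n; induction n as [| n IH]; intro j.
  - rewrite Hinit; apply cell_avg_const; auto; lra.
  - specialize (Hstep n j).
    rewrite (w_next_const _ _ _ _ _ _ _ _ _ ustar) in Hstep; auto.
    apply (strict_mono_sum_inj (fun z => C0 gm gp z (vhalf v dx (j - 1)))
                               (fun z => C0 gm gp z (vhalf v dx j))); auto.
    lra.
Qed.
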